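(* Let $f\in \mathfrak{D}$ have degree $j$, write $f=\sum_i f_i$ with $f_i$ homogeneous of degree $i$, let $A=R/\operatorname{Ann}_R f$, let $a$ be an integer with $0\le a\le j$, set $f_{\ge j-a}=f_j+f_{j-1}+\cdots+f_{j-a}$ and $A'=R/\operatorname{Ann}_R(f_{\ge j-a})$. Then the partial symmetric decompositions agree: $\mathcal{D}_{\le a}(A)=\mathcal{D}_{\le a}(A')$. These partial decompositions depend only on $f$ modulo $\mathfrak{D}_{\le j-a-1}$ up to the action of a unit of $R$ (i.e. if $g\in\mathfrak{D}$ has degree $j$ and $g-u\circ f\in \mathfrak{D}_{\le j-a-1}$ for some unit $u\in R$, then $\mathcal{D}_{\le a}(R/\operatorname{Ann}_R g)=\mathcal{D}_{\le a}(A)$). Moreover $f_{\ge j-a}$ is an $(a+1)$-modification of $f$, i.e. $(\operatorname{Ann}_R f)\cap \mathfrak{m}_R^{\,j-a}=(\operatorname{Ann}_R f_{\ge j-a})\cap\mathfrak{m}_R^{\,j-a}$.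
   Context: Let $\mathsf{k}$ be a field, $R=\mathsf{k}\{x_1,\ldots,x_r\}$ the formal power series ring with maximal ideal $\mathfrak{m}_R$, and $\mathfrak{D}=\mathsf{k}_{DP}[X_1,\ldots,X_r]$ the divided power algebra (divided powers $X_i^{[n]}$), on which $R$ acts by contraction: $x^{\alpha}\circ X^{[\beta]}=X^{[\beta-\alpha]}$ if $\beta-\alpha\ge 0$ componentwise and $0$ otherwise, extended bilinearly. $\mathfrak{D}_t$ denotes the forms of degree $t$ and $\mathfrak{D}_{\le t}$ the elements of degree at most $t$. For $f\in\mathfrak{D}$ of degree $j$, $\operatorname{Ann}_R f=\{\varphi\in R:\varphi\circ f=0\}$ and $A=R/\operatorname{Ann}_R f$ is an Artinian Gorenstein algebra with maximal ideal $\mathfrak{m}_A$ and socle degree $j$ (largest $i$ with $\mathfrak{m}_A^i\neq 0$). Its associated graded algebra is $A^*=\bigoplus_i \mathfrak{m}_A^i/\mathfrak{m}_A^{i+1}$. For $a\ge 0$ the ideal $C_A(a)\subset A^*$ has degree-$i$ component equal to the image in $\mathfrak{m}_A^i/\mathfrak{m}_A^{i+1}$ of $\mathfrak{m}_A^{i}\cap(0:\mathfrak{m}_A^{\,j+1-a-i})$; $Q_A(a)=C_A(a)/C_A(a+1)$, $H_A(a)$ is the Hilbert function of $Q_A(a)$ ($H_A(a)_i=\dim_{\mathsf{k}}Q_A(a)_i$), and the partial symmetric decomposition is $\mathcal{D}_{\le a}(A)=(H_A(0),\ldots,H_A(a))$. An Artinian Gorenstein ideal $J$ (or a dual generator $g$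 with $J=\operatorname{Ann}_R g$) is called an $b$-modification of $I=\operatorname{Ann}_R f$ (socle degree $j$) if $I\cap\mathfrak{m}_R^{\,j+1-b}=J\cap\mathfrak{m}_R^{\,j+1-b}$. *)

From HB Require Import structures.
From mathcomp Require Import all_boot all_order all_algebra.
From mathcomp Require Import mpoly.
From Stdlib Require Import ClassicalEpsilon.

Set Implicit Arguments.
Unset Strict Implicit.
Unset Printing Implicit Defensive.

Import GRing.Theory.
Local Open Scope ring_scope.

Section Gorenstein.
Variables (K : fieldType) (r : nat).

(* R = K{x_1,...,x_r}: a formal power series is its coefficient function on
   monomials x^alpha, alpha : 'X_{1..r}. *)
Definition series := 'X_{1..r} -> K.

Definition sadd (u v : series) : series := fun g => u g + v g.

Definition smul (u v : series) : series := fun g =>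
  \sum_(al : 'X_{1..r < (mdeg g).+1} | lem (bmnm al) g)
     u (bmnm al) * v (g - bmnm al)%MM.

Definition sone : series := fun g => if g == 0%MM then 1 else 0.

Definition sunit (u : series) : Prop := exists v, smul u v = sone.

Definition mpowR (i : nat) (u : series) : Prop :=
  forall al : 'X_{1..r}, (mdeg al < i)%N -> u al = 0.

(* Divided power algebra D = K_DP[X_1..X_r]: an element is represented by
   {mpoly K[r]}, the coefficient p@_beta being the coefficient of the
   divided monomial X^[beta] (only the K-vector space structure is used). *)
Definition DP := {mpoly K[r]}.

(* contraction  x^alpha o X^[beta] = X^[beta - alpha] if alpha <= beta, else 0,
   extended bilinearly; the result is given by its coefficient function. *)
Definition contract (u : series) (f : DP) : 'X_{1..r} -> K := fun g =>
  \sum_(m <- msupp f) f@_m * (if lem g m then u (m - g)%MM else 0).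

Definition Ann (f : DP) (u : series) : Prop := forall g, contract u f g = 0.

Definition hpart (f : DP) (i : nat) : DP :=
  \sum_(m <- msupp f | mdeg m == i) f@_m *: 'X_[m].

Definition ftop (f : DP) (j a : nat) : DP :=
  \sum_(j - a <= i < j.+1) hpart f i.

Definition is_socle_deg (f : DP) (j : nat) : Prop :=
  ~ (forall u, mpowR j u -> Ann f u) /\ (forall u, mpowR j.+1 u -> Ann f u).

Definition socle_deg (f : DP) : nat := epsilon (inhabits 0%N) (is_socle_deg f).

Definition sumset (U W : series -> Prop) (u : series) : Prop :=
  exists v w, U v /\ W w /\ u = sadd v w.

Definition lincomb n (c : 'I_n -> K) (v : 'I_n -> series) : series :=
  fun g => \sum_(k < n) c k * v k g.

(* dim_K (U / W) = n  (U, W subspaces of R with W included in U) *)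
Definition qdim_is (U W : series -> Prop) (n : nat) : Prop :=
  (exists v : 'I_n -> series, (forall k, U (v k)) /\
     forall c : 'I_n -> K, W (lincomb c v) -> forall k, c k = 0) /\
  (forall v : 'I_n.+1 -> series, (forall k, U (v k)) ->
     exists2 c : 'I_n.+1 -> K, W (lincomb c v) & exists k, c k != 0).

Definition qdim (U W : series -> Prop) : nat := epsilon (inhabits 0%N) (qdim_is U W).

(* preimage in R of (0 : m_A^k), A = R/Ann f *)
Definition colon (f : DP) (k : nat) (u : series) : Prop :=
  forall v, mpowR k v -> Ann f (smul u v).

(* preimage in R of  m_A^i /\ (0 : m_A^(j+1-a-i))  (+ m_A^(i+1)), i.e. the
   preimage of the degree-i component C_A(a)_i inside m_A^i/m_A^(i+1) *)
Definition Cpre (f : DP) (a i : nat) : series -> Prop :=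
  let j := socle_deg f in
  sumset (fun u => mpowR i u /\ colon f (j.+1 - a - i) u)
         (sumset (mpowR i.+1) (Ann f)).

Definition HF (f : DP) (a : nat) : nat -> nat := fun i =>
  qdim (Cpre f a i) (Cpre f a.+1 i).

Definition psd (f : DP) (a : nat) : seq (nat -> nat) :=
  [seq HF f b | b <- iota 0 a.+1].

Definition modification (f g : DP) (b : nat) : Prop :=
  forall u, mpowR ((socle_deg f).+1 - b) u -> (Ann f u <-> Ann g u).

End Gorenstein.

(* Modulo Ann f, the degree-i part of C_A(b) is the space of w in m^i whose
   contraction w o f has no terms of degree >= j+1-b-i: indeed w m^k lies in
   Ann f exactly when w o f has degree < k.  For w in m^i, the terms of w o f of
   degree >= d - i only involve the coefficients of f of degree >= d.  Since
   H_A(b) for b <= a only involves these spaces for b and b+1, i.e. degrees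
   >= j-a-i, both D_{<=a}(A) and Ann f on m^(j-a) only depend on f modulo
   D_{<=j-a-1}.  If g agrees there with u o f, then w o g and (u w) o f agree in
   the relevant degrees, and multiplication by the unit u identifies the spaces
   attached to g with those attached to f. *)

From HB Require Import structures.
From mathcomp Require Import all_boot all_order all_algebra.
From mathcomp Require Import mpoly.
From mathcomp Require Import zify.
From mathcomp.algebra_tactics Require Import ring.
From Stdlib Require Import ClassicalEpsilon FunctionalExtensionality PropExtensionality.

Set Implicit Arguments.
Unset Strict Implicit.
Unset Printing Implicit Defensive.
Import GRing.Theory.
Local Open Scope ring_scope.

Ltac mnm_lia :=
  repeat match goal with H : is_true (lem _ _) |- _ => move/mnm_lepP: H => H end;
  first [apply/mnm_lepP => ? | apply/mnmP => ? | idtac];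
  repeat match goal with H : forall i : 'I_ _, _ |- _ => specialize (H ltac:(assumption)) end;
  repeat match goal with H : is_true (_ <= _)%N |- _ => revert H end;
  rewrite ?mnmBE ?mnmDE ?mnm0E; intros; lia.

Section Monomials.
Variable n : nat.

Lemma lem_mdeg (m1 m2 : 'X_{1..n}) : (m1 <= m2)%MM -> (mdeg m1 <= mdeg m2)%N.
Proof. by move=> le12; apply/lemc_mdeg/lem_leo. Qed.

Lemma mdeg_subm (m1 m2 : 'X_{1..n}) :
  (m2 <= m1)%MM -> mdeg (m1 - m2)%MM = (mdeg m1 - mdeg m2)%N.
Proof. by move=> le21; rewrite -{2}(submK le21) mdegD addnK. Qed.

Lemma subKm (m1 m2 : 'X_{1..n}) : (m2 <= m1)%MM -> (m1 - (m1 - m2))%MM = m2.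
Proof. by move=> le21; rewrite submBA // addmC addmK. Qed.

Lemma lem0 (m : 'X_{1..n}) : (0 <= m)%MM.
Proof. by mnm_lia. Qed.

Lemma subm_eq0 (m1 m2 : 'X_{1..n}) : (m2 <= m1)%MM -> ((m1 - m2)%MM == 0%MM) = (m1 == m2).
Proof.
move=> le21; apply/eqP/eqP => [e | ->]; last by mnm_lia.
by rewrite -(submK le21) e add0m.
Qed.

End Monomials.

Lemma sum_seq_pred1 (R : nmodType) (T : eqType) (s : seq T) (a : T) (x : R) : uniq s ->
  \sum_(y <- s) (if y == a then x else 0) = if a \in s then x else 0.
Proof.
move=> s_uniq; case: ifP => [a_s | /negbT a_s].
  by rewrite (bigD1_seq a) //= eqxx big1 ?addr0 // => y /negbTE ->.
by rewrite big1_seq // => y /andP [_ y_s]; case: eqP => // ya; rewrite -ya y_s in a_s.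
Qed.

Section BoundedMonomialSums.
Variables (R : nmodType) (n : nat).
Local Notation mon := 'X_{1..n}.

Lemma sum_bmnm_seq N (s : seq mon) (F : mon -> R) :
  uniq s -> (forall m, m \in s -> (mdeg m < N)%N) ->
  (forall m, (mdeg m < N)%N -> m \notin s -> F m = 0) ->
  \sum_(x : 'X_{1..n < N}) F x = \sum_(m <- s) F m.
Proof.
move=> s_uniq s_lt F0.
pose s0 := map val (index_enum 'X_{1..n < N}).
have s0_uniq : uniq s0 by rewrite map_inj_uniq ?index_enum_uniq //; apply: val_inj.
have mem_s0 m : (m \in s0) = (mdeg m < N)%N.
  apply/mapP/idP => [[x _ ->]|lt_mN]; first exact: bmdeg.
  by exists (BMultinom lt_mN); rewrite ?mem_index_enum.
have -> : \sum_(x : 'X_{1..n < N}) F x = \sum_(m <- s0 | m \in s) F m.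
  rewrite big_map [RHS]big_mkcond; apply: eq_bigr => x _ /=.
  by case: ifP => // /negbT; apply: F0; apply: bmdeg.
have -> : \sum_(m <- s) F m = \sum_(m <- s | m \in s0) F m.
  by rewrite [RHS]big_mkcond; apply: eq_big_seq => m /s_lt; rewrite mem_s0 => ->.
rewrite -big_filter -[RHS]big_filter; apply/perm_big/uniq_perm; rewrite ?filter_uniq //.
by move=> m; rewrite !mem_filter andbC.
Qed.

Lemma sum_bmnm1 N (m0 : mon) (F : mon -> R) : (mdeg m0 < N)%N ->
  (forall m, m != m0 -> F m = 0) -> \sum_(x : 'X_{1..n < N}) F x = F m0.
Proof.
move=> lt_m0N F0; rewrite (sum_bmnm_seq (s := [:: m0])) ?big_seq1 //.
- by move=> m; rewrite inE => /eqP ->.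
- by move=> m _; rewrite inE; apply: F0.
Qed.

Lemma lem_enum (mu : mon) : {s : seq mon | uniq s & forall m, (m \in s) = (m <= mu)%MM}.
Proof.
exists [seq m <- map val (index_enum 'X_{1..n < (mdeg mu).+1}) | (m <= mu)%MM].
  by rewrite filter_uniq // map_inj_uniq ?index_enum_uniq //; apply: val_inj.
move=> m; rewrite mem_filter; case: (boolP (m <= mu)%MM) => //= le_m_mu.
have lt_m : (mdeg m < (mdeg mu).+1)%N by rewrite ltnS lem_mdeg.
by apply/mapP; exists (BMultinom lt_m); rewrite ?mem_index_enum.
Qed.

End BoundedMonomialSums.

Section MpolySize.
Variables (R : ringType) (n : nat).

Lemma msize_le (p : {mpoly R[n]}) N : (forall m, (N <= mdeg m)%N -> p@_m = 0) -> (msize p <= N)%N.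
Proof.
move=> p0; rewrite msizeE; apply/bigmax_leqP_seq => m m_p _.
by rewrite ltnNge; apply/negP => /p0 pm0; move: m_p; rewrite mcoeff_msupp pm0 eqxx.
Qed.

Lemma msize_top (p : {mpoly R[n]}) j : msize p = j.+1 -> exists2 m, mdeg m = j & p@_m != 0.
Proof.
move=> p_j; case: (boolP (has (fun m => mdeg m == j) (msupp p))).
  by case/hasP => m m_p /eqP m_j; exists m; rewrite // -mcoeff_msupp.
move/hasPn => no_j; suff : (msize p <= j)%N by rewrite p_j ltnn.
apply: msize_le => m le_jm; apply: memN_msupp_eq0; apply/negP => m_p.
by move: (no_j m m_p) (msize_mdeg_lt m_p); rewrite p_j => /eqP; lia.
Qed.

End MpolySize.

(** * Contraction *)

Section Contraction.
Variables (K : fieldType) (r : nat).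
Local Notation mon := 'X_{1..r}.
Local Notation ser := (series K r).

Definition smonomial (m0 : mon) : ser := fun g => if g == m0 then 1 else 0.

Lemma mpowR_le i i' (w : ser) : (i <= i')%N -> mpowR i' w -> mpowR i w.
Proof. by move=> le_ii' w_i' al lt_al; apply: w_i'; apply: leq_trans le_ii'. Qed.

Lemma mpowR_smonomial k (m : mon) : (k <= mdeg m)%N -> mpowR k (smonomial m).
Proof.
move=> le_km al lt_al; rewrite /smonomial; case: eqP => // eq_al.
by rewrite eq_al in lt_al; lia.
Qed.

Lemma smul_mpowR (u w : ser) i : mpowR i w -> mpowR i (smul u w).
Proof.
move=> w_i g lt_g; apply: big1 => al _; rewrite w_i ?mulr0 //.
exact: leq_ltn_trans (mdegB _ _) lt_g.
Qed.

Lemma smul_lincomb (u : ser) n (c : 'I_n -> K) v :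
  smul u (lincomb c v) = lincomb c (fun k => smul u (v k)).
Proof.
apply: functional_extensionality => g; rewrite /smul /lincomb.
under eq_bigr do rewrite mulr_sumr.
rewrite exchange_big /=; apply: eq_bigr => k _; rewrite mulr_sumr.
by apply: eq_bigr => m _; rewrite mulrCA.
Qed.

Lemma smulD (u x y : ser) : smul u (sadd x y) = sadd (smul u x) (smul u y).
Proof.
apply: functional_extensionality => g; rewrite /smul /sadd -big_split.
by apply: eq_bigr => m _; rewrite mulrDr.
Qed.

Lemma smulB (u x y : ser) :
  smul u (fun h => x h - y h) = (fun h => smul u x h - smul u y h).
Proof.
apply: functional_extensionality => g; rewrite /smul -sumrB.
by apply: eq_bigr => m _; rewrite mulrBr.
Qed.

(* Unlike [contract], this contraction of a coefficient function can be
   iterated: see [bcontract_smul]. *)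
Definition bcontract N (v : ser) (phi : mon -> K) : mon -> K := fun g =>
  \sum_(x : 'X_{1..r < N}) phi x * (if (g <= x)%MM then v (x - g)%MM else 0).

Lemma contract_bcontract N (u : ser) (f : DP K r) g : (msize f <= N)%N ->
  contract u f g = bcontract N u (fun m => f@_m) g.
Proof.
move=> le_fN; rewrite /bcontract (sum_bmnm_seq (s := msupp f)
  (F := fun m => f@_m * (if (g <= m)%MM then u (m - g)%MM else 0))) ?msupp_uniq //.
- by move=> m /msize_mdeg_lt lt_m; apply: leq_trans le_fN.
- by move=> m _ /memN_msupp_eq0 ->; rewrite mul0r.
Qed.

Lemma sum_bmnm_smul N (y g : mon) (u v : ser) : (mdeg y < N)%N -> (g <= y)%MM ->
  \sum_(x : 'X_{1..r < N}) ((if (x <= y)%MM then u (y - x)%MM else 0) *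
      (if (g <= x)%MM then v (x - g)%MM else 0)) = smul u v (y - g)%MM.
Proof.
move=> lt_yN le_gy; case: (lem_enum (y - g)%MM) => s s_uniq mem_s.
rewrite /smul [RHS]big_mkcond /= (sum_bmnm_seq (s := s)
  (F := fun al => if (al <= y - g)%MM then u al * v (y - g - al)%MM else 0)) //; first last.
- by move=> m _; rewrite mem_s => /negbTE ->.
- by move=> m; rewrite mem_s ltnS => /lem_mdeg.
rewrite (sum_bmnm_seq (s := map (fun al => y - al)%MM s) (F := fun x =>
  (if (x <= y)%MM then u (y - x)%MM else 0) * (if (g <= x)%MM then v (x - g)%MM else 0))).
- rewrite big_map; apply: eq_big_seq => al; rewrite mem_s => le_al.
  have le_al_y : (al <= y)%MM by apply: lepm_trans le_al (lem_subr _ _).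
  rewrite lem_subr subKm // le_al.
  have -> : (g <= y - al)%MM by mnm_lia.
  by have -> : (y - al - g)%MM = (y - g - al)%MM by mnm_lia.
- rewrite map_inj_in_uniq // => al1 al2; rewrite !mem_s => le1 le2 e.
  rewrite -(subKm (lepm_trans le1 (lem_subr _ _))) e subKm //.
  exact: lepm_trans le2 (lem_subr _ _).
- by move=> m /mapP [al _ ->]; apply: leq_ltn_trans lt_yN; apply/lem_mdeg/lem_subr.
- move=> x _ x_notin; case: ifP => le_xy; last by rewrite mul0r.
  case: ifP => le_gx; last by rewrite mulr0.
  case/mapP: x_notin; exists (y - x)%MM; last by rewrite subKm.
  by rewrite mem_s; mnm_lia.
Qed.

Lemma bcontract_smul N (u v : ser) (phi : mon -> K) g :
  bcontract N v (bcontract N u phi) g = bcontract N (smul u v) phi g.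
Proof.
rewrite /bcontract; under eq_bigr do rewrite mulr_suml.
rewrite exchange_big /=; apply: eq_bigr => y _.
under eq_bigr do rewrite -mulrA; rewrite -mulr_sumr; congr (_ * _).
case: ifP => le_gy; first exact: sum_bmnm_smul (bmdeg y) le_gy.
apply: big1 => x _; case: ifP => le_xy; last by rewrite mul0r.
case: ifP => le_gx; last by rewrite mulr0.
by rewrite (lepm_trans le_gx le_xy) in le_gy.
Qed.

Lemma bcontract_ge N v phi (g : mon) : (N <= mdeg g)%N -> bcontract N v phi g = 0.
Proof.
move=> le_Ng; apply: big1 => x _; case: ifP => le_gx; last by rewrite mulr0.
by have := lem_mdeg le_gx; have := bmdeg x; lia.
Qed.

Lemma bcontract_smonomial0 N phi (g : mon) : (mdeg g < N)%N ->
  bcontract N (smonomial g) phi 0%MM = phi g.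
Proof.
move=> lt_gN; rewrite /bcontract (sum_bmnm1 (m0 := g)
  (F := fun m => phi m * (if (0 <= m)%MM then smonomial g (m - 0)%MM else 0))) //.
  by rewrite lem0 subm0 /smonomial eqxx mulr1.
by move=> m ne_mg; rewrite lem0 subm0 /smonomial (negbTE ne_mg) mulr0.
Qed.

Lemma bcontract_one N phi (x : mon) : (mdeg x < N)%N -> bcontract N (@sone K r) phi x = phi x.
Proof.
move=> lt_xN; rewrite /bcontract (sum_bmnm1 (m0 := x)
  (F := fun m => phi m * (if (x <= m)%MM then @sone K r (m - x)%MM else 0))) //.
  by rewrite lepm_refl /sone subm_eq0 ?lepm_refl // eqxx mulr1.
move=> m ne_mx; case: ifP => le_xm; last by rewrite mulr0.
by rewrite /sone subm_eq0 // (negbTE ne_mx) mulr0.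
Qed.

Lemma bcontract_local N d i (phi1 phi2 : mon -> K) (w : ser) g :
  (forall x, (d <= mdeg x)%N -> phi1 x = phi2 x) -> mpowR i w -> (d <= mdeg g + i)%N ->
  bcontract N w phi1 g = bcontract N w phi2 g.
Proof.
move=> phi12 w_i le_d; apply: eq_bigr => x _.
case: (leqP d (mdeg x)) => [/phi12 -> // | lt_xd].
case: ifP => le_gx; last by rewrite !mulr0.
by rewrite w_i ?mulr0 // mdeg_subm //; have := lem_mdeg le_gx; lia.
Qed.

Lemma contract_ge (u : ser) (f : DP K r) g : (msize f <= mdeg g)%N -> contract u f g = 0.
Proof. by move=> le_fg; rewrite (contract_bcontract _ _ (leqnn _)) bcontract_ge. Qed.

Lemma contract_smul (u v : ser) (f : DP K r) g :
  contract (smul u v) f g = bcontract (msize f) v (contract u f) g.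
Proof.
rewrite (contract_bcontract _ _ (leqnn _)) -bcontract_smul; apply: eq_bigr => x _.
by rewrite -(contract_bcontract _ _ (leqnn _)).
Qed.

Lemma contract1 (f : DP K r) g : contract (@sone K r) f g = f@_g.
Proof.
case: (ltnP (mdeg g) (msize f)) => [lt_g | le_g].
  by rewrite (contract_bcontract _ _ (leqnn _)) bcontract_one.
by rewrite contract_ge // memN_msupp_eq0 // msize_mdeg_ge.
Qed.

Lemma contract_local (f f' : DP K r) d i w g :
  (forall x, (d <= mdeg x)%N -> f@_x = f'@_x) -> mpowR i w -> (d <= mdeg g + i)%N ->
  contract w f g = contract w f' g.
Proof.
move=> ff' w_i le_d; pose N := maxn (msize f) (msize f').
rewrite (contract_bcontract _ _ (leq_maxl _ _ : (msize f <= N)%N)).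
rewrite (contract_bcontract _ _ (leq_maxr _ _ : (msize f' <= N)%N)).
exact: bcontract_local ff' w_i le_d.
Qed.

Lemma contract_smul_local (f g : DP K r) u d i w γ : msize g = msize f ->
  (forall m, (d <= mdeg m)%N -> g@_m = contract u f m) -> mpowR i w -> (d <= mdeg γ + i)%N ->
  contract w g γ = contract (smul u w) f γ.
Proof.
move=> gf g_uf w_i le_d; rewrite contract_smul (contract_bcontract _ _ (eq_leq gf)).
exact: bcontract_local g_uf w_i le_d.
Qed.

Lemma contractD (x y : ser) (f : DP K r) g :
  contract (sadd x y) f g = contract x f g + contract y f g.
Proof.
rewrite /contract -big_split; apply: eq_bigr => m _ /=.
by case: ifP => _; rewrite /sadd ?mulrDr // !mulr0 addr0.
Qed.

Lemma contractB (x y : ser) (f : DP K r) g :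
  contract (fun h => x h - y h) f g = contract x f g - contract y f g.
Proof.
rewrite /contract -sumrB; apply: eq_bigr => m _.
by case: ifP => _; rewrite ?mulrBr // !mulr0 subr0.
Qed.

Lemma contract_lincomb (f : DP K r) n (c : 'I_n -> K) v g :
  contract (lincomb c v) f g = \sum_(k < n) c k * contract (v k) f g.
Proof.
rewrite /contract; under [RHS]eq_bigr do rewrite mulr_sumr.
rewrite exchange_big /=; apply: eq_bigr => m _.
case: ifP => _; last by rewrite mulr0 big1 // => k _; rewrite !mulr0.
by rewrite /lincomb mulr_sumr; apply: eq_bigr => k _; rewrite mulrCA.
Qed.

Definition contract_deg_lt (f : DP K r) k (w : ser) :=
  forall g : mon, (k <= mdeg g)%N -> contract w f g = 0.

Lemma contract_deg_lt_congr (f f' : DP K r) k w w' :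
  (forall g, (k <= mdeg g)%N -> contract w f g = contract w' f' g) ->
  contract_deg_lt f k w <-> contract_deg_lt f' k w'.
Proof.
move=> ww'; split=> w_k g le_kg.
  by rewrite -ww' // w_k.
by rewrite ww' // w_k.
Qed.

Lemma colonE (f : DP K r) k w : colon f k w <-> contract_deg_lt f k w.
Proof.
split=> [colon_w g le_kg | w_k v v_k g].
  have := colon_w _ (mpowR_smonomial le_kg) 0%MM; rewrite contract_smul.
  case: (ltnP (mdeg g) (msize f)) => [lt_g | /contract_ge -> //].
  by rewrite bcontract_smonomial0.
rewrite contract_smul; apply: big1 => x _.
case: (leqP k (mdeg x)) => [/w_k -> | lt_xk]; first by rewrite mul0r.
case: ifP => _; last by rewrite mulr0.
by rewrite v_k ?mulr0 //; apply: leq_ltn_trans (mdegB _ _) lt_xk.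
Qed.

Lemma is_socle_deg_msize (p : DP K r) j : msize p = j.+1 -> is_socle_deg p j.
Proof.
move=> p_j; split=> [ann_j | u u_j g].
  have [m0 m0_j pm0] := msize_top p_j.
  have := ann_j _ (mpowR_smonomial (eq_leq (esym m0_j))) 0%MM.
  rewrite (contract_bcontract _ _ (leqnn _)) bcontract_smonomial0 ?p_j ?m0_j //.
  by move=> pm0_eq; rewrite pm0_eq eqxx in pm0.
rewrite (contract_bcontract _ _ (leqnn _)); apply: big1 => x _.
case: ifP => _; last by rewrite mulr0.
by rewrite u_j ?mulr0 // -p_j; apply: leq_ltn_trans (mdegB _ _) (bmdeg x).
Qed.

Lemma socle_deg_eq (p : DP K r) j : is_socle_deg p j -> socle_deg p = j.
Proof.
move=> p_j; rewrite /socle_deg; set j' := epsilon _ _.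
have [not_j' ann_j'] : is_socle_deg p j' := epsilon_spec _ _ (ex_intro _ j p_j).
case: p_j => not_j ann_j; apply/eqP; rewrite eqn_leq; apply/andP; split.
  by rewrite leqNgt; apply/negP => lt_jj'; apply: not_j' => u /(mpowR_le lt_jj'); apply: ann_j.
by rewrite leqNgt; apply/negP => lt_j'j; apply: not_j => u /(mpowR_le lt_j'j); apply: ann_j'.
Qed.

Lemma socle_deg_msize (p : DP K r) j : msize p = j.+1 -> socle_deg p = j.
Proof. by move/is_socle_deg_msize/socle_deg_eq. Qed.

Lemma hpart_coef (f : DP K r) i m : (hpart f i)@_m = if mdeg m == i then f@_m else 0.
Proof.
rewrite /hpart raddf_sum /= big_mkcond /=.
rewrite (eq_bigr (fun m' => if m' == m then (if mdeg m == i then f@_m else 0) else 0)).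
  rewrite sum_seq_pred1 ?msupp_uniq //.
  by case: (boolP (m \in msupp f)) => // /memN_msupp_eq0 ->; case: ifP.
move=> m' _; rewrite mcoeffZ mcoeffX; case: (m' =P m) => [-> | ne].
  by case: ifP; rewrite ?eqxx ?mulr1.
by case: ifP; rewrite ?(introF eqP ne) ?mulr0.
Qed.

Lemma ftop_coef (f : DP K r) j a m :
  (ftop f j a)@_m = if (j - a <= mdeg m <= j)%N then f@_m else 0.
Proof.
rewrite /ftop raddf_sum /=; under eq_bigr do rewrite hpart_coef eq_sym.
by rewrite sum_seq_pred1 ?iota_uniq // mem_index_iota ltnS.
Qed.

Lemma ftop_coef_ge (f : DP K r) j a m : msize f = j.+1 -> (j - a <= mdeg m)%N ->
  (ftop f j a)@_m = f@_m.
Proof.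
move=> f_j le_m; rewrite ftop_coef le_m /=; case: leqP => // lt_jm.
by rewrite memN_msupp_eq0 // msize_mdeg_ge // f_j.
Qed.

Lemma msize_ftop (f : DP K r) j a : msize f = j.+1 -> msize (ftop f j a) = j.+1.
Proof.
move=> f_j; apply/eqP; rewrite eqn_leq; apply/andP; split.
  by apply: msize_le => m lt_jm; rewrite ftop_coef [(mdeg m <= j)%N]leqNgt lt_jm andbF.
have [m0 m0_j fm0] := msize_top f_j.
rewrite -(ftop_coef_ge (a := a) f_j) ?m0_j ?leq_subr // in fm0.
apply: (@leq_trans (mdeg m0).+1); first by rewrite m0_j.
by apply: msize_mdeg_lt; rewrite mcoeff_msupp.
Qed.

(** * Linear closure and quotient dimensions *)

Local Notation szero := (fun _ : mon => 0 : K).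

Lemma sadds0 (x : ser) : sadd x szero = x.
Proof. by apply: functional_extensionality => g; rewrite /sadd addr0. Qed.

(* A record, so that the implicit arguments of lemmas concluding [lin_closed X]
   are not computed through its unfolding. *)
Record lin_closed (X : ser -> Prop) : Prop := LinClosed {
  lincomb_mem : forall n (c : 'I_n -> K) (v : 'I_n -> ser), (forall k, X (v k)) -> X (lincomb c v)
}.

Lemma lin_closed0 X : lin_closed X -> X szero.
Proof.
move=> X_lin; have -> : szero = lincomb (fun _ : 'I_0 => 0) (fun _ => szero).
  by apply: functional_extensionality => g; rewrite /lincomb big_ord0.
by apply: (lincomb_mem X_lin) => -[].
Qed.

Lemma lin_closed2 X (c1 c2 : K) a b : lin_closed X -> X a -> X b ->
  X (fun g => c1 * a g + c2 * b g).
Proof.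
move=> X_lin Xa Xb; have -> : (fun g => c1 * a g + c2 * b g) =
    lincomb (fun k : 'I_2 => if k == ord0 then c1 else c2) (fun k => if k == ord0 then a else b).
  by apply: functional_extensionality => g; rewrite /lincomb big_ord_recl big_ord1.
by apply: (lincomb_mem X_lin) => k; case: ifP.
Qed.

Lemma lin_closedD X a b : lin_closed X -> X a -> X b -> X (sadd a b).
Proof.
suff -> : sadd a b = (fun g => 1 * a g + 1 * b g) by apply: lin_closed2.
by apply: functional_extensionality => g; rewrite !mul1r.
Qed.

Lemma lin_closedB X a b : lin_closed X -> X a -> X b -> X (fun g => a g - b g).
Proof.
suff -> : (fun g => a g - b g) = (fun g => 1 * a g + (-1) * b g) by apply: lin_closed2.
by apply: functional_extensionality => g; rewrite mul1r mulN1r.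
Qed.

Lemma lin_closedI X Y : lin_closed X -> lin_closed Y -> lin_closed (fun w => X w /\ Y w).
Proof.
move=> X_lin Y_lin; split=> n c v XYv.
by split; [apply: (lincomb_mem X_lin) | apply: (lincomb_mem Y_lin)] => k; case: (XYv k).
Qed.

Lemma lin_closed_sumset X Y : lin_closed X -> lin_closed Y -> lin_closed (sumset X Y).
Proof.
move=> X_lin Y_lin; split=> n c v; rewrite /sumset => /(choice _) [s /(choice _) [t st]].
exists (lincomb c s), (lincomb c t); split; first by apply: (lincomb_mem X_lin) => k; case: (st k).
split; first by apply: (lincomb_mem Y_lin) => k; case: (st k) => _ [].
apply: functional_extensionality => g; rewrite /lincomb /sadd -big_split /=.
by apply: eq_bigr => k _; case: (st k) => _ [_ ->]; rewrite mulrDr.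
Qed.

Lemma lin_closed_mpowR i : lin_closed (mpowR i).
Proof. by split=> n c v v_i al lt_al; rewrite /lincomb big1 // => k _; rewrite v_i ?mulr0. Qed.

Lemma lin_closed_Ann f : lin_closed (Ann f).
Proof. by split=> n c v v_ann g; rewrite contract_lincomb big1 // => k _; rewrite v_ann mulr0. Qed.

Lemma lin_closed_contract_deg_lt f k : lin_closed (contract_deg_lt f k).
Proof.
split=> n c v v_k g le_kg; rewrite contract_lincomb big1 // => l _.
by rewrite v_k ?mulr0.
Qed.

Lemma qdim_is_iso (U W U' W' : ser -> Prop) (psi : ser -> ser) n :
  lin_closed U' -> lin_closed W ->
  (forall m (c : 'I_m -> K) v, psi (lincomb c v) = lincomb c (fun k => psi (v k))) ->
  (forall x, U' x -> U (psi x)) ->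
  (forall y, U y -> exists x, U' x /\ W (fun g => y g - psi x g)) ->
  (forall x, U' x -> W' x <-> W (psi x)) ->
  qdim_is U' W' n <-> qdim_is U W n.
Proof.
move=> U'_lin W_lin psi_lin psi_U psi_onto psi_W.
have W'_iff m (c : 'I_m -> K) x : (forall k, U' (x k)) ->
    W' (lincomb c x) <-> W (lincomb c (fun k => psi (x k))).
  by move=> U'x; rewrite -psi_lin; apply/psi_W/(lincomb_mem U'_lin).
have lift m (y : 'I_m -> ser) : (forall k, U (y k)) -> exists x : 'I_m -> ser,
    (forall k, U' (x k)) /\ forall c, W (lincomb c (fun k => psi (x k))) -> W (lincomb c y).
  move=> /(fun Uy k => psi_onto _ (Uy k)) /(choice _) [x xy].
  exists x; split=> [k | c Wx]; first by case: (xy k).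
  have -> : lincomb c y = sadd (lincomb c (fun k => psi (x k)))
                              (lincomb c (fun k g => y k g - psi (x k) g)).
    apply: functional_extensionality => g; rewrite /lincomb /sadd -big_split.
    by apply: eq_bigr => k _ /=; rewrite -mulrDr addrC subrK.
  by apply: lin_closedD Wx _ => //; apply: (lincomb_mem W_lin) => k; case: (xy k).
split=> -[[v [Uv v_free]] dep].
- split.
    exists (fun k => psi (v k)); split=> [k | c Wc]; first exact: psi_U.
    by apply: v_free; apply/W'_iff.
  move=> y /lift [x [U'x Wy]]; have [c Wc c_nz] := dep x U'x.
  by exists c => //; apply/Wy/W'_iff.
- have [x [U'x Wv]] := lift _ _ Uv; split.
    by exists x; split=> // c /W'_iff Wc; apply/v_free/Wv/Wc.
  move=> x' U'x'; have [c Wc c_nz] := dep _ (fun k => psi_U _ (U'x' k)).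
  by exists c => //; apply/W'_iff.
Qed.

(** * The graded pieces of C_A(b) *)

Definition Cset (D : nat -> ser -> Prop) k i (w : ser) := mpowR i w /\ D k w.

(* With [D := contract_deg_lt f] and [k := j+1-b-i] this is [H_A(b)_i = n]:
   see [qdim_is_Cpre]. *)
Definition Cquot_dim_is (D : nat -> ser -> Prop) k i n :=
  qdim_is (Cset D k i) (sumset (Cset D k.-1 i) (mpowR i.+1)) n.

Lemma lin_closed_Cset D k i : lin_closed (D k) -> lin_closed (Cset D k i).
Proof. exact: lin_closedI (lin_closed_mpowR i). Qed.

Lemma CpreE (f : DP K r) b i : Cpre f b i =
  sumset (Cset (contract_deg_lt f) ((socle_deg f).+1 - b - i) i) (sumset (mpowR i.+1) (Ann f)).
Proof.
congr sumset; apply: functional_extensionality => w; apply: propositional_extensionality.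
by split=> -[w_i w_k]; split=> //; apply/colonE.
Qed.

Lemma sumset_Cset_Ann (f : DP K r) k i x : mpowR i x ->
  sumset (Cset (contract_deg_lt f) k i) (sumset (mpowR i.+1) (Ann f)) x <->
  sumset (Cset (contract_deg_lt f) k i) (mpowR i.+1) x.
Proof.
move=> x_i; split; last first.
  move=> [s [t [Cs [t_i ->]]]]; exists s, (sadd t szero); split=> //.
  split; last by rewrite sadds0.
  by exists t, szero; split=> //; split; [exact: lin_closed0 (lin_closed_Ann f) | by []].
move=> [s [_ [[s_i s_k] [[t [a [t_i [a_ann ->]]]] x_eq]]]].
exists (sadd s a), t; split; last split=> //; last first.
  by apply: functional_extensionality => g; rewrite x_eq /sadd addrCA addrC.
split.
  have -> : sadd s a = (fun g => x g - t g).
    by apply: functional_extensionality => g; rewrite x_eq /sadd; ring.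
  exact: lin_closedB (lin_closed_mpowR i) x_i (mpowR_le (leqnSn i) t_i).
by apply: lin_closedD (lin_closed_contract_deg_lt f _) s_k _ => g _; apply: a_ann.
Qed.

Lemma qdim_is_Cpre (f : DP K r) b i n :
  qdim_is (Cpre f b i) (Cpre f b.+1 i) n <->
  Cquot_dim_is (contract_deg_lt f) ((socle_deg f).+1 - b - i) i n.
Proof.
rewrite !CpreE; set k := (_ - b - i)%N.
have -> : ((socle_deg f).+1 - b.+1 - i)%N = k.-1 by rewrite /k; lia.
set D := contract_deg_lt f; set T := sumset (mpowR i.+1) (Ann f).
have T_lin : lin_closed T := lin_closed_sumset (lin_closed_mpowR _) (lin_closed_Ann f).
have C_lin k' : lin_closed (Cset D k' i) := lin_closed_Cset _ (lin_closed_contract_deg_lt f k').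
symmetry; apply: (qdim_is_iso (psi := id)) => //.
- exact: lin_closed_sumset.
- move=> x Cx; exists x, szero; split=> //; split; [exact: lin_closed0 | by rewrite sadds0].
- move=> _ [s [t [Cs [Tt ->]]]]; exists s; split=> //.
  exists szero, t; split; first exact: lin_closed0.
  split=> //; apply: functional_extensionality => g; rewrite /sadd /=; ring.
- by move=> x [x_i _]; rewrite sumset_Cset_Ann.
Qed.

Lemma Cquot_dim_is_ext D D' k i n :
  (forall k' w, (k.-1 <= k')%N -> mpowR i w -> D k' w <-> D' k' w) ->
  Cquot_dim_is D k i n <-> Cquot_dim_is D' k i n.
Proof.
move=> DD'; have CC' k' : (k.-1 <= k')%N -> Cset D k' i = Cset D' k' i.
  move=> le_k'; apply: functional_extensionality => w; apply: propositional_extensionality.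
  by split=> -[w_i w_k]; split=> //; apply/(DD' k').
by rewrite /Cquot_dim_is !CC' // leq_pred.
Qed.

Section UnitMultiplication.
Variables (f : DP K r) (u v : ser).
Hypothesis uv1 : smul u v = @sone K r.

Lemma contract_smul_unitK y g : contract (smul u (smul v y)) f g = contract y f g.
Proof.
rewrite contract_smul -bcontract_smul (contract_bcontract _ _ (leqnn _)).
by apply: eq_bigr => x _; rewrite -contract_smul uv1 contract1.
Qed.

Local Notation D := (contract_deg_lt f).
Local Notation Du := (fun k w => contract_deg_lt f k (smul u w)).

Lemma Cset_smul_onto k i y : Cset D k i y ->
  exists x, Cset Du k i x /\ sumset (Cset D k.-1 i) (mpowR i.+1) (fun g => y g - smul u x g).
Proof.
move=> [y_i y_k]; exists (smul v y); split.
  by split=> [|g le_kg]; [exact: smul_mpowR | rewrite contract_smul_unitK y_k].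
exists (fun g => y g - smul u (smul v y) g), szero; split; last split.
- split; first exact: lin_closedB (lin_closed_mpowR i) y_i (smul_mpowR _ (smul_mpowR _ y_i)).
  by move=> g _; rewrite contractB contract_smul_unitK subrr.
- exact: lin_closed0 (lin_closed_mpowR _).
- by rewrite sadds0.
Qed.

Lemma sumset_Cset_smul k i x : mpowR i x ->
  sumset (Cset Du k i) (mpowR i.+1) x <-> sumset (Cset D k i) (mpowR i.+1) (smul u x).
Proof.
move=> x_i; split.
  move=> [s [t [[s_i s_k] [t_i ->]]]]; rewrite smulD.
  by exists (smul u s), (smul u t); do !split=> //; apply: smul_mpowR.
move=> [s [t [[s_i s_k] [t_i ux_eq]]]].
have vt_i : mpowR i.+1 (smul v t) by apply: smul_mpowR.
exists (fun g => x g - smul v t g), (smul v t); do !split=> //.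
- exact: lin_closedB (lin_closed_mpowR i) x_i (mpowR_le (leqnSn i) vt_i).
- move=> g le_kg; rewrite smulB contractB ux_eq contractD contract_smul_unitK.
  by rewrite s_k // add0r subrr.
- by apply: functional_extensionality => g; rewrite /sadd subrK.
Qed.

Lemma Cquot_dim_is_smul k i n : Cquot_dim_is Du k i n <-> Cquot_dim_is D k i n.
Proof.
have Du_lin k' : lin_closed (Du k').
  split=> m c w w_k'; rewrite /= smul_lincomb.
  exact: (lincomb_mem (lin_closed_contract_deg_lt f k')).
apply: (qdim_is_iso (psi := smul u)).
- exact: lin_closed_Cset.
- exact: lin_closed_sumset (lin_closed_Cset _ (lin_closed_contract_deg_lt _ _))
                          (lin_closed_mpowR _).
- exact: smul_lincomb.
- by move=> x [x_i x_k]; split; first exact: smul_mpowR.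
- exact: Cset_smul_onto.
- by move=> x [x_i _]; apply: sumset_Cset_smul.
Qed.

End UnitMultiplication.

Lemma psd_ext (f f' : DP K r) a :
  (forall b i n, (b <= a)%N ->
     qdim_is (Cpre f b i) (Cpre f b.+1 i) n <-> qdim_is (Cpre f' b i) (Cpre f' b.+1 i) n) ->
  psd f a = psd f' a.
Proof.
move=> eq_dim; apply/eq_in_map => b; rewrite mem_iota add0n ltnS => /andP [_ le_ba].
apply: functional_extensionality => i; rewrite /HF /qdim; congr epsilon.
by apply: functional_extensionality => n; apply: propositional_extensionality; apply: eq_dim.
Qed.

Lemma psd_ftop (f : DP K r) j a : msize f = j.+1 -> psd f a = psd (ftop f j a) a.
Proof.
move=> f_j; apply: psd_ext => b i n le_ba.
rewrite !qdim_is_Cpre (socle_deg_msize f_j) (socle_deg_msize (msize_ftop a f_j)).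
apply: Cquot_dim_is_ext => k w le_k w_i; apply: contract_deg_lt_congr => g le_kg.
apply: (contract_local (d := j - a)) w_i _; first by move=> x /(ftop_coef_ge f_j) ->.
by lia.
Qed.

Lemma psd_unit_equiv (f g : DP K r) u j a : msize f = j.+1 -> msize g = j.+1 -> sunit u ->
  (forall m, (j - a <= mdeg m)%N -> g@_m = contract u f m) -> psd g a = psd f a.
Proof.
move=> f_j g_j [v uv1] g_uf; apply: psd_ext => b i n le_ba.
rewrite !qdim_is_Cpre (socle_deg_msize f_j) (socle_deg_msize g_j).
rewrite -(Cquot_dim_is_smul f uv1).
apply: Cquot_dim_is_ext => k w le_k w_i; apply: contract_deg_lt_congr => γ le_kγ.
apply: (contract_smul_local _ g_uf w_i); first by rewrite f_j g_j.
by lia.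
Qed.

Lemma ftop_modification (f : DP K r) j a : msize f = j.+1 -> modification f (ftop f j a) a.+1.
Proof.
move=> f_j; rewrite /modification (socle_deg_msize f_j) subSS => w w_ja.
suff eq_fF γ : contract w f γ = contract w (ftop f j a) γ.
  by split=> ann γ; rewrite ?eq_fF // -eq_fF.
apply: (contract_local (d := j - a)) w_ja _; first by move=> x /(ftop_coef_ge f_j) ->.
exact: leq_addl.
Qed.

End Contraction.

Theorem corollary1p15 (K : fieldType) (r : nat) (f : DP K r) (j a : nat) :
  msize f = j.+1 -> (a <= j)%N ->
  [/\ psd f a = psd (ftop f j a) a,
      (forall (g : DP K r) (u : series K r),
          msize g = j.+1 -> sunit u ->
          (forall m : 'X_{1..r}, (j - a <= mdeg m)%N -> g@_m = contract u f m) ->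
          psd g a = psd f a)
    & modification f (ftop f j a) a.+1].
Proof.
move=> f_j _; split; first exact: psd_ftop.
  by move=> g u g_j; apply: psd_unit_equiv.
exact: ftop_modification.
Qed.
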